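(* Let $V$ be one of the following algebraic tensor products of $\mathfrak{sl}(2,\mathbb{C})$-modules: (i) $N(0,b)\otimes N(a,0)$ with $a,b\in\mathbb{R}_{<0}$; (ii) $N(-1-x+iy,x+iy)\otimes N(a,0)$ with $-1\le x<0$, $y\in\mathbb{R}_{>0}$, $a\in\mathbb{R}_{<0}$; (iii) $N(a_1,a_2)\otimes N(a,0)$ with $-1<a_1,a_2<0$, $a\in\mathbb{R}_{<0}$. Write the first factor as $N(b_1,b_2)$ (so $(b_1,b_2)=(0,b)$, resp. $(-1-x+iy,x+iy)$, resp. $(a_1,a_2)$), let $x(k)$ be its standard basis, let $y(l)=x(-l)$ ($l\in\mathbb{Z}_{\ge0}$) be the reindexed standard basis of $N(a,0)$, and put $z(k,l)=x(k)\otimes y(l)$. For $n_0\in\mathbb{Z}$ let $V_{n_0}$ be the weight space of $V$ of weight $b_1-b_2+a+2n_0$ (spanned by the $z(k,l)$ with $k-l=n_0$), let $l_0$ be the smallest $l\in\mathbb{Z}_{\ge0}$ for which $z(l+n_0,l)$ is defined (i.e. $l+n_0$ is an index of the basis of the first factor), and set $z_{n_0}=z(l_0+n_0,l_0)$. Let $\mathfrak{c}=\mathbb{C}\,(FE)$, so that $\mathcal{U}(\mathfrak{c})=\mathbb{C}[FE]\subset\mathcal{U}(\mathfrak{sl}(2,\mathbb{C}))$. Then: (1) as a $\mathcal{U}(\mathfrak{c})$-module, $V_{n_0}$ is cyclic, generated by $z_{n_0}$; (2) the map $\rho_{n_0}:\mathcal{U}(\mathfrak{c})\to V_{n_0}$,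 $\rho_{n_0}(u)=u\cdot z_{n_0}$, is a bijection.
   Context: $\mathfrak{sl}(2,\mathbb{C})$ has basis $H,E,F$ with $[H,E]=2E$, $[H,F]=-2F$, $[E,F]=H$; it acts on tensor products by $X(v\otimes w)=Xv\otimes w+v\otimes Xw$. For $(c_1,c_2)\in\mathbb{C}^2$ let $\mathcal{K}(c_1,c_2)$ be the set of $k\in\mathbb{Z}$ such that for each $i\in\{1,2\}$ with $c_i\in\mathbb{Z}$ one has ($c_i+(-1)^{i-1}k<0$ iff $c_i<0$). The module $N(c_1,c_2)$ has basis $\{x(k):k\in\mathcal{K}(c_1,c_2)\}$ (the ''standard basis''; $x(k):=0$ for $k\notin\mathcal{K}$), with $H\cdot x(k)=(c_1-c_2+2k)x(k)$ and: (I) if neither $c_1$ nor $c_2$ is a negative integer: $E x(k)=(c_2-k)x(k+1)$, $F x(k)=(c_1+k)x(k-1)$; (II) if $c_1$ is not a negative integer and $c_2$ is: $E x(k)=x(k+1)$, $F x(k)=(c_1+k)(c_2-k+1)x(k-1)$; (III) if $c_1$ is a negative integer and $c_2$ is not: $E x(k)=(c_1+k+1)(c_2-k)x(k+1)$, $F x(k)=x(k-1)$; (IV) if both are negative integers: $E x(k)=(c_1+k+1)x(k+1)$, $F x(k)=(c_2-k+1)x(k-1)$. For $a<0$ the index set of $N(a,0)$ is contained in $\mathbb{Z}_{\le 0}$, whence the reindexing $y(l)=x(-l)$. *)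

From mathcomp Require Import all_boot all_order all_algebra.
From mathcomp Require Import boolp reals.
From mathcomp.real_closed Require Export complex.
Set Implicit Arguments. Unset Strict Implicit. Unset Printing Implicit Defensive.
Import Order.TTheory GRing.Theory Num.Theory.
Local Open Scope ring_scope.

Section SL2.
Variable R : realType.
Local Notation C := R[i].

Definition isNegInt (c : C) : Prop := exists z : int, z < 0 /\ c = z%:~R.

Definition inK (c1 c2 : C) (k : int) : Prop :=
  (forall z : int, c1 = z%:~R -> ((z + k < 0) <-> (z < 0))) /\
  (forall z : int, c2 = z%:~R -> ((z - k < 0) <-> (z < 0))).

(* E x(k) = ecoef c1 c2 k * x(k+1) *)
Definition ecoef (c1 c2 : C) (k : int) : C :=
  let K := (k%:~R : C) in
  if asbool (isNegInt c1) then
    (if asbool (isNegInt c2) then c1 + K + 1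
     else (c1 + K + 1) * (c2 - K))
  else
    (if asbool (isNegInt c2) then 1
     else c2 - K).

(* F x(k) = fcoef c1 c2 k * x(k-1) *)
Definition fcoef (c1 c2 : C) (k : int) : C :=
  let K := (k%:~R : C) in
  if asbool (isNegInt c1) then
    (if asbool (isNegInt c2) then c2 - K + 1
     else 1)
  else
    (if asbool (isNegInt c2) then (c1 + K) * (c2 - K + 1)
     else c1 + K).

(* Action on coefficient vectors v : int -> C of N(c1,c2);
   v j is the coefficient of x(j).  (x(k) := 0 for k outside K.) *)
Definition Eact (c1 c2 : C) (v : int -> C) (j : int) : C :=
  if asbool (inK c1 c2 j) then ecoef c1 c2 (j - 1) * v (j - 1) else 0.
Definition Fact (c1 c2 : C) (v : int -> C) (j : int) : C :=
  if asbool (inK c1 c2 j) then fcoef c1 c2 (j + 1) * v (j + 1) else 0.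
Definition Hact (c1 c2 : C) (v : int -> C) (j : int) : C :=
  (c1 - c2 + 2 * j%:~R) * v j.

(* Tensor product N(b1,b2) (x) N(a1,a2): an element is given by its
   coefficient function f, f k m = coefficient of x(k) (x) x(m). *)
Definition tens := int -> int -> C.

Definition inV (b1 b2 a1 a2 : C) (f : tens) : Prop :=
  (forall k m, f k m <> 0 -> inK b1 b2 k /\ inK a1 a2 m) /\
  exists N : nat, forall k m, (N < `|k|)%N \/ (N < `|m|)%N -> f k m = 0.

Definition Etens (b1 b2 a1 a2 : C) (f : tens) : tens :=
  fun k m => Eact b1 b2 (fun k' => f k' m) k + Eact a1 a2 (f k) m.
Definition Ftens (b1 b2 a1 a2 : C) (f : tens) : tens :=
  fun k m => Fact b1 b2 (fun k' => f k' m) k + Fact a1 a2 (f k) m.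
Definition Htens (b1 b2 a1 a2 : C) (f : tens) : tens :=
  fun k m => Hact b1 b2 (fun k' => f k' m) k + Hact a1 a2 (f k) m.

Definition FEtens (b1 b2 a1 a2 : C) (f : tens) : tens :=
  Ftens b1 b2 a1 a2 (Etens b1 b2 a1 a2 f).

Definition weight_space (b1 b2 a1 a2 : C) (w : C) (f : tens) : Prop :=
  inV b1 b2 a1 a2 f /\ Htens b1 b2 a1 a2 f = (fun k m => w * f k m).

Definition basis_tens (k0 m0 : int) : tens :=
  fun k m => if (k == k0) && (m == m0) then 1 else 0.

(* U(c) = C[FE] is identified with the polynomial ring {poly C} via t |-> FE;
   rho z p = p(FE) . z *)
Definition rho (b1 b2 a1 a2 : C) (z : tens) (p : {poly C}) : tens :=
  fun k m => \sum_(i < size p) p`_i * (iter i (FEtens b1 b2 a1 a2) z) k m.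

End SL2.

From mathcomp Require Import all_boot all_order all_algebra.
From mathcomp Require Import boolp reals.
From mathcomp.real_closed Require Import complex.
From mathcomp Require Import zify ring lra.
Import Order.TTheory GRing.Theory Num.Theory.
Local Open Scope ring_scope.

(* A vector of the weight space V_n0 is supported on the antidiagonal
   [k + m = n0] with [m <= 0]; call the largest [l = - m] it involves its depth.
   In all three cases the E-coefficients of the first factor never vanish, and
   neither do the F-coefficients of N(a,0) at nonpositive indices, so FE raises
   the depth by exactly one and its top coefficient is a nonzero multiple of the
   previous one.  Hence (FE)^i z_n0 has depth exactly l0 + i, while by
   minimality of l0 no nonzero vector of V_n0 has depth below l0.  Eliminating
   top coefficients one at a time shows that the (FE)^i z_n0 form a basis of
   V_n0, which is both statements. *)

Section FirstFactor.
Context {R : realType}.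
Local Notation C := R[i].

Lemma intrC (z : int) : (z%:~R : C) = Complex z%:~R 0.
Proof. by rewrite complexr0 rmorph_int. Qed.

Lemma Complex_eq_intr (u v : R) (z : int) : Complex u v = z%:~R -> u = z%:~R /\ v = 0.
Proof. by rewrite intrC => -[-> ->]. Qed.

Lemma Complex_neq_intr {u v : R} :
  v != 0 \/ (-1 < u /\ u < 0) -> forall z : int, Complex u v <> z%:~R.
Proof.
move=> uv z /Complex_eq_intr [uz v0]; case: uv => [|[]]; first by rewrite v0 eqxx.
rewrite uz ltrz0 => z_gtm1 z_lt0.
have : (-1 : int) < z by rewrite -(ltr_int R) mulrNz.
lia.
Qed.

Lemma not_isNegInt0 : ~ isNegInt (0 : C).
Proof. by move=> [z [z_lt0 /eqP]]; rewrite eq_sym intr_eq0 => /eqP z0; rewrite z0 in z_lt0. Qed.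

Lemma inK_succ {c1 c2 : C} k :
  (forall z : int, c1 = z%:~R -> 0 <= z) -> (forall z : int, c2 = z%:~R -> z < 0) ->
  inK c1 c2 k -> inK c1 c2 (k + 1).
Proof.
move=> c1_ge0 c2_lt0 [K1 K2]; split=> z cz.
- by have := K1 z cz; have := c1_ge0 z cz; move=> ? [? ?]; split=> ?; lia.
- by have := K2 z cz; have := c2_lt0 z cz; move=> ? [? ?]; split=> ?; lia.
Qed.

Lemma inK_neg0 {a : R} (m : int) : a < 0 -> inK (Complex a 0) 0 m <-> m <= 0.
Proof.
move=> a_lt0; split.
- move=> [_ /(_ 0)]; rewrite mulr0z => /(_ erefl) [m_ge0 _].
  by rewrite leNgt; apply/negP => m_gt0; have /m_ge0 : 0 - m < 0 by lia.
- move=> m_le0; split=> z.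
  + move=> /Complex_eq_intr [az _]; have : z < 0 by rewrite -(ltrz0 R) -az.
    by move=> ?; split=> ?; lia.
  + by move/eqP; rewrite eq_sym intr_eq0 => /eqP ->; split=> ?; lia.
Qed.

Lemma fcoef_neg0_neq0 (a : R) (j : int) : a < 0 -> j <= 0 -> fcoef (Complex a 0) 0 j != 0.
Proof.
move=> a_lt0 j_le0; rewrite /fcoef (asboolF not_isNegInt0).
case: asboolP => _; first by rewrite oner_eq0.
apply/eqP => /(congr1 (@complex.Re R)); rewrite (intrC j) /= => aj0.
have : (j%:~R : R) <= 0 by rewrite lerz0.
lra.
Qed.

Lemma ecoef_neq0 {b1 b2 : C} k :
  ~ isNegInt b1 -> (forall z : int, b2 <> z%:~R) -> ecoef b1 b2 k != 0.
Proof.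
move=> b1N b2Z; have b2N : ~ isNegInt b2 by move=> [z [_ /b2Z]].
by rewrite /ecoef (asboolF b1N) (asboolF b2N) subr_eq0; apply/eqP; apply: b2Z.
Qed.

Lemma first_factor_props {b1 b2 : C} :
  ((exists b : R, b < 0 /\ b1 = 0 /\ b2 = Complex b 0) \/
   (exists x y : R, -1 <= x /\ x < 0 /\ 0 < y /\
                    b1 = Complex (-1 - x) y /\ b2 = Complex x y) \/
   (exists a1 a2 : R, -1 < a1 /\ a1 < 0 /\ -1 < a2 /\ a2 < 0 /\
                      b1 = Complex a1 0 /\ b2 = Complex a2 0)) ->
  [/\ forall z : int, b1 = z%:~R -> 0 <= z, forall z : int, b2 = z%:~R -> z < 0
    & forall k, ecoef b1 b2 k != 0].
Proof.
have nonint_case (u1 v1 u2 v2 : R) :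
    v1 != 0 \/ (-1 < u1 /\ u1 < 0) -> v2 != 0 \/ (-1 < u2 /\ u2 < 0) ->
    [/\ forall z : int, Complex u1 v1 = z%:~R -> 0 <= z,
         forall z : int, Complex u2 v2 = z%:~R -> z < 0
       & forall k, ecoef (Complex u1 v1) (Complex u2 v2) k != 0].
  move=> uv1 uv2; have N1 : ~ isNegInt (Complex u1 v1).
    by move=> [z [_ /(Complex_neq_intr uv1)]].
  split=> [z /(Complex_neq_intr uv1)|z /(Complex_neq_intr uv2)|k] //.
  exact: ecoef_neq0 k N1 (Complex_neq_intr uv2).
case=> [[b [b_lt0 [-> ->]]]|[[x [y [_ [_ [y_gt0 [-> ->]]]]]]|[u [v [? [? [? [? [-> ->]]]]]]]]].
- split.
  + by move=> z /eqP; rewrite eq_sym intr_eq0 => /eqP ->.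
  + by move=> z /Complex_eq_intr [bz _]; rewrite -(ltrz0 R) -bz.
  + move=> k; rewrite /ecoef (asboolF not_isNegInt0); case: asboolP => b2N.
      by rewrite oner_eq0.
    rewrite subr_eq0; apply/eqP => bk; apply: b2N; exists k; split=> //.
    by move: bk => /Complex_eq_intr [bk _]; rewrite -(ltrz0 R) -bk.
- by apply: nonint_case; left; rewrite gt_eqF.
- by apply: nonint_case; right.
Qed.
End FirstFactor.

Section WeightSpace.
Context {R : realType}.
Local Notation C := R[i].
Context {a : R} {b1 b2 : C} {n0 : int} {l0 : nat}.
Hypothesis a_lt0 : a < 0.
Hypothesis ecoef_b_neq0 : forall k, ecoef b1 b2 k != 0.
Hypothesis inK_b_succ : forall k, inK b1 b2 k -> inK b1 b2 (k + 1).
Hypothesis inK_l0 : inK b1 b2 (l0%:Z + n0).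
Hypothesis l0_min : forall l : nat, (l < l0)%N -> ~ inK b1 b2 (l%:Z + n0).

Local Notation a1 := (Complex a 0).
Local Notation FE := (FEtens b1 b2 a1 0).
Local Notation KB k := (asbool (inK b1 b2 k)).
Local Notation KA m := (asbool (inK a1 0 m)).
Local Notation eb := (ecoef b1 b2).
Local Notation fb := (fcoef b1 b2).
Local Notation ea := (ecoef a1 0).
Local Notation fa := (fcoef a1 0).
Local Notation w := (b1 - b2 + a1 - 0 + 2 * n0%:~R).

Lemma FEtens_expand (f : tens R) k m : FE f k m =
  (if KB k then fb (k + 1) * ((if KB (k + 1) then eb k * f k m else 0) +
      (if KA m then ea (m - 1) * f (k + 1) (m - 1) else 0)) else 0) +
  (if KA m then fa (m + 1) * ((if KB k then eb (k - 1) * f (k - 1) (m + 1) else 0) +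
      (if KA (m + 1) then ea m * f k m else 0)) else 0).
Proof. by rewrite /FEtens /Ftens /Etens /Fact /Eact !addrK. Qed.

Lemma FEtens_neq0 {f : tens R} {k m} : FE f k m != 0 ->
  [\/ f k m != 0, f (k + 1) (m - 1) != 0 | f (k - 1) (m + 1) != 0].
Proof.
move=> FEf; apply/or3P; move: FEf; apply: contraLR.
rewrite !negb_or !negbK => /and3P[/eqP f0 /eqP fD /eqP fU].
by rewrite FEtens_expand f0 fD fU !(mulr0, if_same, addr0).
Qed.

Definition diag_supported (f : tens R) :=
  forall k m, f k m != 0 -> [/\ k + m = n0, inK b1 b2 k & m <= 0].

Definition depth_le (L : int) (f : tens R) := forall k m, f k m != 0 -> - m <= L.

Lemma depth_le_eq0 {L f} k m : depth_le L f -> L < - m -> f k m = 0.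
Proof. by move=> fL Lm; apply/eqP; apply: contraTT Lm => /fL; rewrite -leNgt. Qed.

Lemma diag_supported_lin {f g} c : diag_supported f -> diag_supported g ->
  diag_supported (fun k m => f k m - c * g k m).
Proof.
move=> fS gS k m /=; have [->|/fS //] := eqVneq (f k m) 0.
by have [->|/gS //] := eqVneq (g k m) 0; rewrite mulr0 subrr eqxx.
Qed.

Lemma depth_le_lin {L f g} c : depth_le L f -> depth_le L g ->
  depth_le L (fun k m => f k m - c * g k m).
Proof.
move=> fL gL k m /=; have [->|/fL //] := eqVneq (f k m) 0.
by have [->|/gL //] := eqVneq (g k m) 0; rewrite mulr0 subrr eqxx.
Qed.

Lemma depth_le_pred {L f} : diag_supported f -> depth_le L f -> f (L + n0) (- L) = 0 ->
  depth_le (L - 1) f.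
Proof.
move=> fS fL ftop k m fkm; have [km _ _] := fS _ _ fkm; have := fL _ _ fkm.
case: (ltrP (- m) L) => [|Lm mL]; first lia.
have [kL mL'] : k = L + n0 /\ m = - L by lia.
by rewrite kL mL' ftop eqxx in fkm.
Qed.

Lemma depth_le_FE L f : depth_le L f -> depth_le (L + 1) (FE f).
Proof. by move=> fL k m /FEtens_neq0 [] /fL; lia. Qed.

Lemma diag_supported_FE f : diag_supported f -> diag_supported (FE f).
Proof.
move=> fS k m FEf; have [fkm|/fS //] := eqVneq (f k m) 0.
have [Kk Km] : inK b1 b2 k /\ inK a1 0 m.
  move: FEf; rewrite FEtens_expand fkm.
  by case: (asboolP (inK b1 b2 k)); case: (asboolP (inK a1 0 m));
    rewrite ?(mulr0, if_same, addr0, add0r, mul0r) ?eqxx.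
split=> //; last exact/(inK_neg0 _ a_lt0).
by case: (FEtens_neq0 FEf) => [|/fS[]|/fS[]]; rewrite ?fkm ?eqxx //; lia.
Qed.

(* The only contribution at depth [L + 1] is [E] on the first factor followed
   by [F] on the second. *)
Lemma FE_top_coef {f L} k m : diag_supported f -> depth_le L f -> 0 <= L ->
  k = L + 1 + n0 -> m = - (L + 1) ->
  FE f k m = fa (- L) * eb (L + n0) * f (L + n0) (- L).
Proof.
move=> fS fL L_ge0 -> ->.
rewrite FEtens_expand (depth_le_eq0 _ (- (L + 1)) fL) ?(depth_le_eq0 _ (- (L + 1) - 1) fL); try lia.
have -> : L + 1 + n0 - 1 = L + n0 by lia.
have -> : - (L + 1) + 1 = - L by lia.
rewrite (asboolT (_ : inK a1 0 _)); last by apply/(inK_neg0 _ a_lt0); lia.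
rewrite !(mulr0, if_same, addr0, add0r).
have [->|/fS[_ K _]] := eqVneq (f (L + n0) (- L)) 0; first by rewrite !(mulr0, if_same).
by rewrite asboolT ?mulrA // -addrA (addrC 1) addrA; apply: inK_b_succ.
Qed.

Definition zn0 : tens R := basis_tens R (l0%:Z + n0) (- l0%:Z).

Lemma diag_supported_zn0 : diag_supported zn0.
Proof.
move=> k m; rewrite /zn0 /basis_tens.
by case: andP => [[/eqP -> /eqP ->] _|]; [split=> //; lia | rewrite eqxx].
Qed.

Lemma depth_le_zn0 : depth_le l0%:Z zn0.
Proof.
move=> k m; rewrite /zn0 /basis_tens.
by case: andP => [[_ /eqP ->] _|]; [lia | rewrite eqxx].
Qed.

Lemma diag_supported_FE_iter i : diag_supported (iter i FE zn0).
Proof. by elim: i => [|i IHi]; [exact: diag_supported_zn0 | exact: diag_supported_FE]. Qed.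

Lemma depth_le_FE_iter (i : nat) : depth_le (l0%:Z + i%:Z) (iter i FE zn0).
Proof.
elim: i => [|i IHi]; first by rewrite addr0; exact: depth_le_zn0.
by rewrite iterS -addn1 PoszD addrA; exact: depth_le_FE.
Qed.

Lemma FE_iter_top_neq0 (i : nat) :
  iter i FE zn0 (l0%:Z + i%:Z + n0) (- (l0%:Z + i%:Z)) != 0.
Proof.
elim: i => [|i IHi]; first by rewrite /= addr0 /zn0 /basis_tens !eqxx oner_eq0.
rewrite iterS (FE_top_coef _ _ (diag_supported_FE_iter i) (depth_le_FE_iter i)); try lia.
by rewrite !mulf_neq0 // fcoef_neg0_neq0 //; lia.
Qed.

Local Notation rh := (rho b1 b2 a1 0 zn0).

Lemma rho_widen (p : {poly C}) N k m : (size p <= N)%N ->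
  rh p k m = \sum_(i < N) p`_i * iter i FE zn0 k m.
Proof.
move=> pN; rewrite /rho (big_ord_widen N (fun i => p`_i * iter i FE zn0 k m) pN) big_mkcond.
by apply: eq_bigr => i _; case: ltnP => // ?; rewrite nth_default // mul0r.
Qed.

Lemma rhoDZ (p q : {poly C}) c k m : rh (p + c *: q) k m = rh p k m + c * rh q k m.
Proof.
set N := maxn (size p) (size q).
have pN : (size p <= N)%N by rewrite leq_maxl.
have qN : (size q <= N)%N by rewrite leq_maxr.
have pqN : (size (p + c *: q)%R <= N)%N.
  rewrite (leq_trans (size_polyD _ _)) // geq_max pN /=.
  exact: leq_trans (size_scale_leq _ _) qN.
rewrite !(rho_widen _ _ _ _ pN, rho_widen _ _ _ _ qN, rho_widen _ _ _ _ pqN).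
by rewrite mulr_sumr -big_split; apply: eq_bigr => i _; rewrite coefD coefZ mulrDl mulrA.
Qed.

Lemma rho_Xn n k m : rh 'X^n k m = iter n FE zn0 k m.
Proof.
rewrite /rho size_polyXn big_ord_recr /= big1 ?add0r; first by rewrite coefXn eqxx mul1r.
by move=> i _; rewrite coefXn ltn_eqF ?mul0r.
Qed.

Lemma rho_neq0 {p : {poly C}} {k m} : rh p k m != 0 ->
  exists i : 'I_(size p), iter i FE zn0 k m != 0.
Proof.
apply: contraNP => /forallNP FE0; rewrite /rho big1 // => i _.
by move/negP: (FE0 i); rewrite negbK => /eqP ->; rewrite mulr0.
Qed.

Lemma diag_supported_rho (p : {poly C}) : diag_supported (rh p).
Proof. by move=> k m /rho_neq0 [i /diag_supported_FE_iter]. Qed.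

Lemma depth_le_rho (p : {poly C}) : depth_le (l0%:Z + (size p)%:Z) (rh p).
Proof. by move=> k m /rho_neq0 [i /depth_le_FE_iter]; have := ltn_ord i; lia. Qed.

Lemma weight_space_of_diag f L :
  diag_supported f -> depth_le L f -> weight_space b1 b2 a1 0 w f.
Proof.
move=> fS fL; split; first split.
- by move=> k m /eqP /fS [_ Kk m_le0]; split=> //; apply/(inK_neg0 _ a_lt0).
- exists (`|L| + `|n0|)%N => k m km; have [//|fkm] := eqVneq (f k m) 0.
  by have [? _ ?] := fS _ _ fkm; have := fL _ _ fkm; lia.
- apply: funext => k; apply: funext => m; rewrite /Htens /Hact.
  have [->|/fS [km _ _]] := eqVneq (f k m) 0; first by rewrite !mulr0 addr0.
  by rewrite -km intrD; ring.
Qed.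

Lemma diag_of_weight_space f : weight_space b1 b2 a1 0 w f ->
  diag_supported f /\ exists L, depth_le L f.
Proof.
move=> [[fK [N fN]] fH]; split.
- move=> k m fkm; have [Kk Km] : inK b1 b2 k /\ inK a1 0 m by apply: fK; apply/eqP.
  split=> //; last exact/(inK_neg0 _ a_lt0).
  have : (((2 * (k + m - n0)) : int)%:~R : C) * f k m = 0.
    apply/eqP; rewrite -subr_eq0 subr0 -(subrr (w * f k m)).
    rewrite -{1}(congr1 (fun g => g k m) fH) /Htens /Hact intrM intrB intrD.
    by apply/eqP; ring.
  by move/eqP; rewrite mulf_eq0 (negbTE fkm) orbF intr_eq0 => /eqP; lia.
- exists N%:Z => k m fkm; case: (leqP `|m|%N N) => mN; first lia.
  by move/eqP: fkm; rewrite fN //; right.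
Qed.

Lemma depth_lt_l0_eq0 f : diag_supported f -> depth_le (l0%:Z - 1) f -> f = fun _ _ => 0.
Proof.
move=> fS fL; apply: funext => k; apply: funext => m.
have [//|fkm] := eqVneq (f k m) 0; have [km Kk m_le0] := fS _ _ fkm; have ml0 := fL _ _ fkm.
case: (l0_min `|m|%N); first lia.
by have <- : k = (`|m|%N)%:Z + n0 by lia.
Qed.

Lemma rho_onto_depth_le (n : nat) f : diag_supported f ->
  depth_le (l0%:Z + n%:Z - 1) f -> exists p, rh p = f.
Proof.
elim: n f => [|n IHn] f fS fL.
  exists 0; rewrite addr0 in fL; rewrite (depth_lt_l0_eq0 _ fS fL).
  by apply: funext => k; apply: funext => m; rewrite /rho size_poly0 big_ord0.
set L := l0%:Z + n%:Z; have {}fL : depth_le L f by rewrite /L; move: fL; congr depth_le; lia.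
set c := f (L + n0) (- L) / iter n FE zn0 (L + n0) (- L).
set f' := fun k m => f k m - c * iter n FE zn0 k m.
have f'S : diag_supported f' := diag_supported_lin c fS (diag_supported_FE_iter n).
have [p' rhp'] : exists p', rh p' = f'.
  apply: IHn => //; apply: depth_le_pred f'S (depth_le_lin c fL (depth_le_FE_iter n)) _.
  by rewrite /f' /c divfK ?subrr // FE_iter_top_neq0.
exists (p' + c *: 'X^n); apply: funext => k; apply: funext => m.
by rewrite rhoDZ rho_Xn rhp' /f' subrK.
Qed.

(* The leading coefficient of [r] survives alone at depth [l0 + deg r]. *)
Lemma rho_eq0 (r : {poly C}) : (forall k m, rh r k m = 0) -> r = 0.
Proof.
move=> rh0; apply: contraTeq isT => r_neq0.
set d := (size r).-1; set L := l0%:Z + d%:Z.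
have sr : size r = d.+1 by rewrite /d prednK // size_poly_gt0.
have := rh0 (L + n0) (- L); rewrite (rho_widen _ d.+1 _ _ (eq_leq sr)) big_ord_recr /=.
rewrite big1 ?add0r => [/eqP|i _].
  by rewrite mulf_eq0 -lead_coefE lead_coef_eq0 (negbTE r_neq0) (negbTE (FE_iter_top_neq0 d)).
by rewrite (depth_le_eq0 _ _ (depth_le_FE_iter i)) ?mulr0 //; have := ltn_ord i; lia.
Qed.

Lemma rho_inj : injective rh.
Proof.
move=> p q pq; apply/eqP; rewrite -subr_eq0 -scaleN1r; apply/eqP; apply: rho_eq0 => k m.
by rewrite rhoDZ pq mulN1r subrr.
Qed.

Lemma rho_weight_space_bij :
  [/\ forall p, weight_space b1 b2 a1 0 w (rh p),
      forall f, weight_space b1 b2 a1 0 w f -> exists p, rh p = f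
    & injective rh].
Proof.
split=> [p|f /diag_of_weight_space [fS [L fL]]|]; last exact: rho_inj.
  exact: weight_space_of_diag (diag_supported_rho p) (depth_le_rho p).
by apply: (rho_onto_depth_le `|L|.+1) => // k m /fL; lia.
Qed.
End WeightSpace.

Theorem mainTheorem2 (R : realType) (a : R) (b1 b2 : R[i]) (n0 : int) (l0 : nat) :
  a < 0 ->
  ((exists b : R, b < 0 /\ b1 = 0 /\ b2 = Complex b 0) \/
   (exists x y : R, -1 <= x /\ x < 0 /\ 0 < y /\
                    b1 = Complex (-1 - x) y /\ b2 = Complex x y) \/
   (exists a1 a2 : R, -1 < a1 /\ a1 < 0 /\ -1 < a2 /\ a2 < 0 /\
                      b1 = Complex a1 0 /\ b2 = Complex a2 0)) ->
  (inK b1 b2 (l0%:Z + n0) /\ inK (Complex a 0) 0 (- l0%:Z)) ->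
  (forall l : nat, (l < l0)%N ->
     ~ (inK b1 b2 (l%:Z + n0) /\ inK (Complex a 0) 0 (- l%:Z))) ->
  let a1 := Complex a 0 in
  let a2 := (0 : R[i]) in
  let w := b1 - b2 + a1 - a2 + 2 * n0%:~R in
  let zn0 := @basis_tens R (l0%:Z + n0) (- l0%:Z) in
  let rh := rho b1 b2 a1 a2 zn0 in
  (forall p, weight_space b1 b2 a1 a2 w (rh p)) /\
  (forall v, weight_space b1 b2 a1 a2 w v -> exists p, rh p = v) /\
  (forall p q, rh p = rh q -> p = q).
Proof.
move=> a_lt0 b_cases [inK_l0 _] l0_min.
have [b1_ge0 b2_lt0 ecoef_b_neq0] := first_factor_props b_cases.
have l0_min_b l : (l < l0)%N -> ~ inK b1 b2 (l%:Z + n0).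
  by move=> l_lt_l0 Kl; apply: (l0_min l l_lt_l0); split=> //; apply/(inK_neg0 _ a_lt0); lia.
have [rho_in rho_onto rho_inj] := rho_weight_space_bij a_lt0 ecoef_b_neq0
  (fun k => inK_succ k b1_ge0 b2_lt0) inK_l0 l0_min_b.
by split; [|split].
Qed.
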